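(* Let $\alpha_1,\alpha_2,\alpha_0,\beta_0$ be nonzero real constants with $\alpha_1\beta_0^2=\alpha_2\alpha_0^2$, and consider the lattice Schwarzian KdV equation for $u_{n,m}$, $(n,m)\in\mathbb{Z}^2$: $$\mathbb{Q}\equiv\alpha_1 (u_{n,m}-u_{n,m+1}-\beta_0)(u_{n+1,m}-u_{n+1,m+1}-\beta_0)-\alpha_2 (u_{n,m}-u_{n+1,m}-\alpha_0)(u_{n,m+1}-u_{n+1,m+1}-\alpha_0)=0.$$ Then the non-autonomous generator $G_{n,m}\,\partial_{u_{n,m}}$ with $$G_{n,m}=\frac{4n(u_{n,m}-u_{n-1,m}+\alpha_0)(u_{n,m}-u_{n+1,m}-\alpha_0)}{u_{n+1,m}-u_{n-1,m}+2\alpha_0}+\frac{4m(u_{n,m}-u_{n,m-1}+\beta_0)(u_{n,m}-u_{n,m+1}-\beta_0)}{u_{n,m+1}-u_{n,m-1}+2\beta_0}$$ is a generalized symmetry of $\mathbb{Q}=0$.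
   Context: A generator $G_{n,m}\partial_{u_{n,m}}$, where $G_{n,m}$ is a function of finitely many values $u_{n+i,m+j}$ (and possibly of $n,m$), and $G_{n+i,m+j}$ denotes the same expression with all indices shifted (including the explicit factors $n$, $m$, which become $n+i$, $m+j$), is called a generalized symmetry of $\mathbb{Q}(u_{n,m},u_{n+1,m},u_{n,m+1},u_{n+1,m+1})=0$ if $$G_{n,m}\frac{\partial \mathbb{Q}}{\partial u_{n,m}}+G_{n+1,m}\frac{\partial \mathbb{Q}}{\partial u_{n+1,m}}+G_{n,m+1}\frac{\partial \mathbb{Q}}{\partial u_{n,m+1}}+G_{n+1,m+1}\frac{\partial \mathbb{Q}}{\partial u_{n+1,m+1}}=0$$ at every $(n,m)$ for every solution $u$ of the lattice equation on $\mathbb{Z}^2$ for which all denominators involved are nonzero (equivalently, the expression vanishes modulo the equation and its shifts). *)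

From Stdlib Require Import Reals ZArith.
From Coquelicot Require Import Coquelicot.
Open Scope R_scope.

(* Q(u_{n,m}, u_{n+1,m}, u_{n,m+1}, u_{n+1,m+1}) for the lattice Schwarzian KdV *)
Definition Qsk (a1 a2 a0 b0 : R) (x y z w : R) : R :=
  a1 * (x - z - b0) * (y - w - b0) - a2 * (x - y - a0) * (z - w - a0).

Definition dQ1 a1 a2 a0 b0 x y z w := Derive (fun t => Qsk a1 a2 a0 b0 t y z w) x.
Definition dQ2 a1 a2 a0 b0 x y z w := Derive (fun t => Qsk a1 a2 a0 b0 x t z w) y.
Definition dQ3 a1 a2 a0 b0 x y z w := Derive (fun t => Qsk a1 a2 a0 b0 x y t w) z.
Definition dQ4 a1 a2 a0 b0 x y z w := Derive (fun t => Qsk a1 a2 a0 b0 x y z t) w.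

Definition denN (a0 : R) (u : Z -> Z -> R) (n m : Z) : R :=
  u (n + 1)%Z m - u (n - 1)%Z m + 2 * a0.
Definition denM (b0 : R) (u : Z -> Z -> R) (n m : Z) : R :=
  u n (m + 1)%Z - u n (m - 1)%Z + 2 * b0.

Definition Gsym (a0 b0 : R) (u : Z -> Z -> R) (n m : Z) : R :=
  4 * IZR n * (u n m - u (n - 1)%Z m + a0) * (u n m - u (n + 1)%Z m - a0)
    / denN a0 u n m
  + 4 * IZR m * (u n m - u n (m - 1)%Z + b0) * (u n m - u n (m + 1)%Z - b0)
    / denM b0 u n m.

(** The gauge [v n m = u n m + n a0 + m b0] turns the lattice Schwarzian KdV
    equation into the cross-ratio equation
    [Q = a1 (x - z)(y - w) - a2 (x - y)(z - w) = 0] on the squares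
    [(x, y, z, w) = (v_{n,m}, v_{n+1,m}, v_{n,m+1}, v_{n+1,m+1})], and [G] into
    [4 (n K_n + m K_m)], where [K_n = (v - v_{n-1})(v - v_{n+1})/(v_{n+1} - v_{n-1})]
    and [K_m] is its analogue in [m].  Writing
    [K_n = (v - v_{n+1}) + (v - v_{n+1})^2/(v_{n+1} - v_{n-1})], the linearization
    of [Q] along [K_n] splits into a polynomial in the square and two "fluxes"
    through its left and right edges.  Each flux involves only two adjacent
    quads and, on solutions, equals [a1 (y - w)^2] resp. [- a1 (x - z)^2]; hence
    [K_n] is a symmetry, and so is [K_m] by transposition.  The explicit factors
    [n] and [m] grow by one along the square; the extra terms this produces, the
    linearization along the right column of [K_n] and the top row of [K_m], equal
    [a2 (x - y)(z - w)] and [- a1 (x - z)(y - w)], which add up to [- Q = 0]. *)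

From Stdlib Require Import Reals ZArith Lra.
From Coquelicot Require Import Coquelicot.
Open Scope R_scope.

Definition Qcr (a1 a2 x y z w : R) : R := a1 * (x - z) * (y - w) - a2 * (x - y) * (z - w).

Definition Qcr_dx (a1 a2 x y z w : R) : R := a1 * (y - w) - a2 * (z - w).
Definition Qcr_dy (a1 a2 x y z w : R) : R := a1 * (x - z) + a2 * (z - w).
Definition Qcr_dz (a1 a2 x y z w : R) : R := - a1 * (y - w) - a2 * (x - y).
Definition Qcr_dw (a1 a2 x y z w : R) : R := - a1 * (x - z) + a2 * (x - y).

Definition Qcr_lin (a1 a2 gx gy gz gw x y z w : R) : R :=
  gx * Qcr_dx a1 a2 x y z w + gy * Qcr_dy a1 a2 x y z w
  + gz * Qcr_dz a1 a2 x y z w + gw * Qcr_dw a1 a2 x y z w.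

Definition kflow (l c r : R) : R := (c - l) * (c - r) / (r - l).

Lemma kflow_split_right (l c r : R) : r - l <> 0 ->
  kflow l c r = (c - r) + (c - r) ^ 2 / (r - l).
Proof. intros. unfold kflow. field. assumption. Qed.

Lemma kflow_split_left (l c r : R) : r - l <> 0 ->
  kflow l c r = (l - c) + (c - l) ^ 2 / (r - l).
Proof. intros. unfold kflow. field. assumption. Qed.

Section CrossRatio.
Variables a1 a2 : R.

Lemma Qcr_shift_right (x y z w y2 w2 : R) :
  Qcr a1 a2 y y2 w w2 = Qcr a1 a2 x y z w + (y2 - x) * Qcr_dx a1 a2 x y z w
    + (w2 - z) * Qcr_dz a1 a2 x y z w - a2 * (y2 - x) * (w2 - z).
Proof. unfold Qcr, Qcr_dx, Qcr_dz. ring. Qed.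

Lemma Qcr_dy_dz (x y z w : R) :
  a2 * (y - x) ^ 2 * Qcr_dy a1 a2 x y z w
  = - a1 * (x - z) ^ 2 * Qcr_dz a1 a2 x y z w
    + (a2 * (y - x) - a1 * (x - z)) * Qcr a1 a2 x y z w.
Proof. unfold Qcr, Qcr_dy, Qcr_dz. ring. Qed.

Lemma Qcr_dw_dx (x y z w : R) :
  a2 * (w - z) ^ 2 * Qcr_dw a1 a2 x y z w
  = - a1 * (x - z) ^ 2 * Qcr_dx a1 a2 x y z w
    + (a1 * (x - z) + a2 * (w - z)) * Qcr a1 a2 x y z w.
Proof. unfold Qcr, Qcr_dw, Qcr_dx. ring. Qed.

Lemma Qcr_flux_right (x y z w y2 w2 : R) :
  a2 <> 0 -> y2 - x <> 0 -> w2 - z <> 0 ->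
  Qcr a1 a2 x y z w = 0 -> Qcr a1 a2 y y2 w w2 = 0 ->
  (y - x) ^ 2 / (y2 - x) * Qcr_dy a1 a2 x y z w
  + (w - z) ^ 2 / (w2 - z) * Qcr_dw a1 a2 x y z w = - a1 * (x - z) ^ 2.
Proof.
  intros ha2 hy hw hQ hQr.
  pose proof (Qcr_dy_dz x y z w) as hdy; pose proof (Qcr_dw_dx x y z w) as hdw.
  rewrite hQ, Rmult_0_r, Rplus_0_r in hdy, hdw.
  assert (hshift : (y2 - x) * Qcr_dx a1 a2 x y z w + (w2 - z) * Qcr_dz a1 a2 x y z w
                = a2 * (y2 - x) * (w2 - z)).
  { rewrite (Qcr_shift_right x y z w y2 w2), hQ in hQr. lra. }
  transitivity ((a2 * (y - x) ^ 2 * Qcr_dy a1 a2 x y z w * (w2 - z)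
                 + a2 * (w - z) ^ 2 * Qcr_dw a1 a2 x y z w * (y2 - x))
                / (a2 * (y2 - x) * (w2 - z))).
  { field. auto. }
  rewrite hdy, hdw.
  transitivity (- a1 * (x - z) ^ 2
                * ((y2 - x) * Qcr_dx a1 a2 x y z w + (w2 - z) * Qcr_dz a1 a2 x y z w)
                / (a2 * (y2 - x) * (w2 - z))).
  { unfold Rdiv. ring. }
  rewrite hshift. field. auto.
Qed.

Lemma Qcr_reflect (x y z w : R) : Qcr a1 a2 y x w z = Qcr a1 a2 x y z w.
Proof. unfold Qcr. ring. Qed.

Lemma Qcr_flux_left (x y z w xl zl : R) :
  a2 <> 0 -> y - xl <> 0 -> w - zl <> 0 ->
  Qcr a1 a2 xl x zl z = 0 -> Qcr a1 a2 x y z w = 0 ->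
  (x - y) ^ 2 / (y - xl) * Qcr_dx a1 a2 x y z w
  + (z - w) ^ 2 / (w - zl) * Qcr_dz a1 a2 x y z w = a1 * (y - w) ^ 2.
Proof.
  intros ha2 hy hw hQl hQ.
  assert (hopp : forall p q : R, p - q <> 0 -> q - p <> 0).
  { intros p q hpq. contradict hpq. lra. }
  pose proof (Qcr_flux_right y x w z xl zl ha2 (hopp _ _ hy) (hopp _ _ hw)
    (eq_trans (Qcr_reflect x y z w) hQ) (eq_trans (Qcr_reflect xl x zl z) hQl)) as hR.
  replace (xl - y) with (- (y - xl)) in hR by ring.
  replace (zl - w) with (- (w - zl)) in hR by ring.
  replace (Qcr_dy a1 a2 y x w z) with (Qcr_dx a1 a2 x y z w) in hR
    by (unfold Qcr_dy, Qcr_dx; ring).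
  replace (Qcr_dw a1 a2 y x w z) with (Qcr_dz a1 a2 x y z w) in hR
    by (unfold Qcr_dw, Qcr_dz; ring).
  replace ((y - x) ^ 2) with ((x - y) ^ 2) in hR by ring.
  replace ((w - z) ^ 2) with ((z - w) ^ 2) in hR by ring.
  rewrite !Rdiv_opp_r in hR. lra.
Qed.

Lemma Qcr_lin_kflow_n (xl x y y2 zl z w w2 : R) :
  a2 <> 0 -> y - xl <> 0 -> y2 - x <> 0 -> w - zl <> 0 -> w2 - z <> 0 ->
  Qcr a1 a2 xl x zl z = 0 -> Qcr a1 a2 x y z w = 0 -> Qcr a1 a2 y y2 w w2 = 0 ->
  Qcr_lin a1 a2 (kflow xl x y) (kflow x y y2) (kflow zl z w) (kflow z w w2) x y z w = 0.
Proof.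
  intros ha2 hxl hy2 hzl hw2 hQl hQ hQr.
  rewrite (kflow_split_right xl x y hxl), (kflow_split_left x y y2 hy2).
  rewrite (kflow_split_right zl z w hzl), (kflow_split_left z w w2 hw2).
  pose proof (Qcr_flux_left x y z w xl zl ha2 hxl hzl hQl hQ) as hL.
  pose proof (Qcr_flux_right x y z w y2 w2 ha2 hy2 hw2 hQ hQr) as hR.
  unfold Qcr_lin.
  transitivity ((x - y) * (Qcr_dx a1 a2 x y z w + Qcr_dy a1 a2 x y z w)
                + (z - w) * (Qcr_dz a1 a2 x y z w + Qcr_dw a1 a2 x y z w)
                + a1 * (y - w) ^ 2 - a1 * (x - z) ^ 2).
  { rewrite <- hL. lra. }
  unfold Qcr_dx, Qcr_dy, Qcr_dz, Qcr_dw. ring.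
Qed.

Lemma Qcr_lin_kflow_right (x y z w y2 w2 : R) :
  a2 <> 0 -> y2 - x <> 0 -> w2 - z <> 0 ->
  Qcr a1 a2 x y z w = 0 -> Qcr a1 a2 y y2 w w2 = 0 ->
  Qcr_lin a1 a2 0 (kflow x y y2) 0 (kflow z w w2) x y z w = a2 * (x - y) * (z - w).
Proof.
  intros ha2 hy2 hw2 hQ hQr.
  rewrite (kflow_split_left x y y2 hy2), (kflow_split_left z w w2 hw2).
  pose proof (Qcr_flux_right x y z w y2 w2 ha2 hy2 hw2 hQ hQr) as hR.
  unfold Qcr_lin.
  transitivity ((x - y) * Qcr_dy a1 a2 x y z w + (z - w) * Qcr_dw a1 a2 x y z w
                - a1 * (x - z) ^ 2 + Qcr a1 a2 x y z w).
  { rewrite hQ. lra. }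
  unfold Qcr, Qcr_dy, Qcr_dw. ring.
Qed.

End CrossRatio.

Lemma Qcr_transpose (a1 a2 x y z w : R) : Qcr a2 a1 x z y w = - Qcr a1 a2 x y z w.
Proof. unfold Qcr. ring. Qed.

Lemma Qcr_lin_transpose (a1 a2 gx gy gz gw x y z w : R) :
  Qcr_lin a2 a1 gx gz gy gw x z y w = - Qcr_lin a1 a2 gx gy gz gw x y z w.
Proof. unfold Qcr_lin, Qcr_dx, Qcr_dy, Qcr_dz, Qcr_dw. ring. Qed.

Lemma Qcr_zero_transpose (a1 a2 x y z w : R) :
  Qcr a1 a2 x y z w = 0 -> Qcr a2 a1 x z y w = 0.
Proof. rewrite Qcr_transpose. lra. Qed.

Lemma Qcr_lin_kflow_m (a1 a2 xb yb x y z w z2 w3 : R) :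
  a1 <> 0 -> z - xb <> 0 -> w - yb <> 0 -> z2 - x <> 0 -> w3 - y <> 0 ->
  Qcr a1 a2 xb yb x y = 0 -> Qcr a1 a2 x y z w = 0 -> Qcr a1 a2 z w z2 w3 = 0 ->
  Qcr_lin a1 a2 (kflow xb x z) (kflow yb y w) (kflow x z z2) (kflow y w w3) x y z w = 0.
Proof.
  intros ha1 hxb hyb hz2 hw3 hQb hQ hQt.
  pose proof (Qcr_lin_kflow_n a2 a1 xb x z z2 yb y w w3 ha1 hxb hz2 hyb hw3
    (Qcr_zero_transpose _ _ _ _ _ _ hQb) (Qcr_zero_transpose _ _ _ _ _ _ hQ)
    (Qcr_zero_transpose _ _ _ _ _ _ hQt)) as h.
  rewrite Qcr_lin_transpose in h. lra.
Qed.

Lemma Qcr_lin_kflow_top (a1 a2 x y z w z2 w3 : R) :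
  a1 <> 0 -> z2 - x <> 0 -> w3 - y <> 0 ->
  Qcr a1 a2 x y z w = 0 -> Qcr a1 a2 z w z2 w3 = 0 ->
  Qcr_lin a1 a2 0 0 (kflow x z z2) (kflow y w w3) x y z w = - a1 * (x - z) * (y - w).
Proof.
  intros ha1 hz2 hw3 hQ hQt.
  pose proof (Qcr_lin_kflow_right a2 a1 x z y w z2 w3 ha1 hz2 hw3
    (Qcr_zero_transpose _ _ _ _ _ _ hQ) (Qcr_zero_transpose _ _ _ _ _ _ hQt)) as h.
  rewrite Qcr_lin_transpose in h. lra.
Qed.

Section Lattice.
Variables (a1 a2 : R) (v : Z -> Z -> R).
Hypotheses (ha1 : a1 <> 0) (ha2 : a2 <> 0).
Hypothesis hv : forall i j : Z,
  Qcr a1 a2 (v i j) (v (i + 1)%Z j) (v i (j + 1)%Z) (v (i + 1)%Z (j + 1)%Z) = 0.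

Definition kflow_n (i j : Z) : R := kflow (v (i - 1)%Z j) (v i j) (v (i + 1)%Z j).
Definition kflow_m (i j : Z) : R := kflow (v i (j - 1)%Z) (v i j) (v i (j + 1)%Z).

Definition Qcr_lin_at (g : Z -> Z -> R) (i j : Z) : R :=
  Qcr_lin a1 a2 (g i j) (g (i + 1)%Z j) (g i (j + 1)%Z) (g (i + 1)%Z (j + 1)%Z)
    (v i j) (v (i + 1)%Z j) (v i (j + 1)%Z) (v (i + 1)%Z (j + 1)%Z).

Lemma Qcr_lin_at_master (n m : Z) :
  (forall i j : Z, (i = n \/ i = (n + 1)%Z) -> (j = m \/ j = (m + 1)%Z) ->
     v (i + 1)%Z j - v (i - 1)%Z j <> 0 /\ v i (j + 1)%Z - v i (j - 1)%Z <> 0) ->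
  Qcr_lin_at (fun i j => IZR i * kflow_n i j + IZR j * kflow_m i j) n m = 0.
Proof.
  intros hden.
  destruct (hden n m (or_introl eq_refl) (or_introl eq_refl)) as [hn00 hm00].
  destruct (hden (n + 1)%Z m (or_intror eq_refl) (or_introl eq_refl)) as [hn10 hm10].
  destruct (hden n (m + 1)%Z (or_introl eq_refl) (or_intror eq_refl)) as [hn01 hm01].
  destruct (hden (n + 1)%Z (m + 1)%Z (or_intror eq_refl) (or_intror eq_refl)) as [hn11 hm11].
  pose proof (hv n m) as hQ.
  pose proof (hv (n + 1)%Z m) as hQr.
  pose proof (hv n (m + 1)%Z) as hQt.
  pose proof (hv (n - 1)%Z m) as hQl.
  pose proof (hv n (m - 1)%Z) as hQb.
  rewrite Z.sub_add in hQl, hQb.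
  unfold Qcr_lin_at, kflow_n, kflow_m.
  rewrite !Z.add_simpl_r in *.
  rewrite !plus_IZR.
  set (x := v n m) in *; set (y := v (n + 1)%Z m) in *;
  set (z := v n (m + 1)%Z) in *; set (w := v (n + 1)%Z (m + 1)%Z) in *.
  transitivity
    (IZR n * Qcr_lin a1 a2 (kflow (v (n - 1)%Z m) x y) (kflow x y (v (n + 1 + 1)%Z m))
                           (kflow (v (n - 1)%Z (m + 1)%Z) z w)
                           (kflow z w (v (n + 1 + 1)%Z (m + 1)%Z)) x y z w
     + IZR m * Qcr_lin a1 a2 (kflow (v n (m - 1)%Z) x z) (kflow (v (n + 1)%Z (m - 1)%Z) y w)
                             (kflow x z (v n (m + 1 + 1)%Z))
                             (kflow y w (v (n + 1)%Z (m + 1 + 1)%Z)) x y z w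
     + Qcr_lin a1 a2 0 (kflow x y (v (n + 1 + 1)%Z m)) 0
                       (kflow z w (v (n + 1 + 1)%Z (m + 1)%Z)) x y z w
     + Qcr_lin a1 a2 0 0 (kflow x z (v n (m + 1 + 1)%Z))
                         (kflow y w (v (n + 1)%Z (m + 1 + 1)%Z)) x y z w).
  { unfold Qcr_lin. ring. }
  rewrite Qcr_lin_kflow_n, Qcr_lin_kflow_m, Qcr_lin_kflow_right, Qcr_lin_kflow_top;
    try assumption.
  transitivity (- Qcr a1 a2 x y z w); [unfold Qcr; ring | rewrite hQ; ring].
Qed.

End Lattice.

Definition gauge (a0 b0 : R) (u : Z -> Z -> R) (i j : Z) : R :=
  u i j + IZR i * a0 + IZR j * b0.

Lemma Qsk_gauge (a1 a2 a0 b0 s x y z w : R) :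
  Qsk a1 a2 a0 b0 x y z w = Qcr a1 a2 (x + s) (y + s + a0) (z + s + b0) (w + s + a0 + b0).
Proof. unfold Qsk, Qcr. ring. Qed.

Lemma dQ1_gauge (a1 a2 a0 b0 s x y z w : R) :
  dQ1 a1 a2 a0 b0 x y z w = Qcr_dx a1 a2 (x + s) (y + s + a0) (z + s + b0) (w + s + a0 + b0).
Proof. unfold dQ1, Qsk, Qcr_dx. apply is_derive_unique. auto_derive; [easy | ring]. Qed.

Lemma dQ2_gauge (a1 a2 a0 b0 s x y z w : R) :
  dQ2 a1 a2 a0 b0 x y z w = Qcr_dy a1 a2 (x + s) (y + s + a0) (z + s + b0) (w + s + a0 + b0).
Proof. unfold dQ2, Qsk, Qcr_dy. apply is_derive_unique. auto_derive; [easy | ring]. Qed.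

Lemma dQ3_gauge (a1 a2 a0 b0 s x y z w : R) :
  dQ3 a1 a2 a0 b0 x y z w = Qcr_dz a1 a2 (x + s) (y + s + a0) (z + s + b0) (w + s + a0 + b0).
Proof. unfold dQ3, Qsk, Qcr_dz. apply is_derive_unique. auto_derive; [easy | ring]. Qed.

Lemma dQ4_gauge (a1 a2 a0 b0 s x y z w : R) :
  dQ4 a1 a2 a0 b0 x y z w = Qcr_dw a1 a2 (x + s) (y + s + a0) (z + s + b0) (w + s + a0 + b0).
Proof. unfold dQ4, Qsk, Qcr_dw. apply is_derive_unique. auto_derive; [easy | ring]. Qed.

Lemma denN_gauge (a0 b0 : R) (u : Z -> Z -> R) (i j : Z) :
  denN a0 u i j = gauge a0 b0 u (i + 1)%Z j - gauge a0 b0 u (i - 1)%Z j.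
Proof. unfold denN, gauge. rewrite plus_IZR, minus_IZR. ring. Qed.

Lemma denM_gauge (a0 b0 : R) (u : Z -> Z -> R) (i j : Z) :
  denM b0 u i j = gauge a0 b0 u i (j + 1)%Z - gauge a0 b0 u i (j - 1)%Z.
Proof. unfold denM, gauge. rewrite plus_IZR, minus_IZR. ring. Qed.

Lemma Gsym_gauge (a0 b0 : R) (u : Z -> Z -> R) (i j : Z) :
  Gsym a0 b0 u i j
  = 4 * (IZR i * kflow_n (gauge a0 b0 u) i j + IZR j * kflow_m (gauge a0 b0 u) i j).
Proof.
  unfold Gsym, kflow_n, kflow_m, kflow, Rdiv.
  rewrite (denN_gauge a0 b0), (denM_gauge a0 b0).
  unfold gauge. rewrite !plus_IZR, !minus_IZR. ring.
Qed.

Theorem mainTheorem4 (a1 a2 a0 b0 : R)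
  (h1 : a1 <> 0) (h2 : a2 <> 0) (h0 : a0 <> 0) (hb : b0 <> 0)
  (hrel : a1 * b0 ^ 2 = a2 * a0 ^ 2)
  (u : Z -> Z -> R)
  (hsol : forall n m : Z,
      Qsk a1 a2 a0 b0 (u n m) (u (n + 1)%Z m) (u n (m + 1)%Z) (u (n + 1)%Z (m + 1)%Z) = 0)
  (n m : Z)
  (hden : forall i j : Z, (i = n \/ i = (n + 1)%Z) -> (j = m \/ j = (m + 1)%Z) ->
      denN a0 u i j <> 0 /\ denM b0 u i j <> 0) :
  let x := u n m in
  let y := u (n + 1)%Z m in
  let z := u n (m + 1)%Z in
  let w := u (n + 1)%Z (m + 1)%Z in
  Gsym a0 b0 u n m * dQ1 a1 a2 a0 b0 x y z w
  + Gsym a0 b0 u (n + 1)%Z m * dQ2 a1 a2 a0 b0 x y z w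
  + Gsym a0 b0 u n (m + 1)%Z * dQ3 a1 a2 a0 b0 x y z w
  + Gsym a0 b0 u (n + 1)%Z (m + 1)%Z * dQ4 a1 a2 a0 b0 x y z w = 0.
Proof.
  intros x y z w.
  set (v := gauge a0 b0 u).
  assert (hv : forall i j : Z,
    Qcr a1 a2 (v i j) (v (i + 1)%Z j) (v i (j + 1)%Z) (v (i + 1)%Z (j + 1)%Z) = 0).
  { intros i j. rewrite <- (hsol i j), (Qsk_gauge _ _ _ _ (IZR i * a0 + IZR j * b0)).
    unfold v, gauge. rewrite !plus_IZR. f_equal; ring. }
  set (s := IZR n * a0 + IZR m * b0).
  rewrite (dQ1_gauge _ _ _ _ s), (dQ2_gauge _ _ _ _ s), (dQ3_gauge _ _ _ _ s),
    (dQ4_gauge _ _ _ _ s).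
  replace (x + s) with (v n m) by (unfold v, gauge, x, s; ring).
  replace (y + s + a0) with (v (n + 1)%Z m) by (unfold v, gauge, y, s; rewrite plus_IZR; ring).
  replace (z + s + b0) with (v n (m + 1)%Z) by (unfold v, gauge, z, s; rewrite plus_IZR; ring).
  replace (w + s + a0 + b0) with (v (n + 1)%Z (m + 1)%Z)
    by (unfold v, gauge, w, s; rewrite !plus_IZR; ring).
  rewrite !Gsym_gauge. fold v.
  transitivity
    (4 * Qcr_lin_at a1 a2 v (fun i j => IZR i * kflow_n v i j + IZR j * kflow_m v i j) n m).
  { unfold Qcr_lin_at, Qcr_lin. ring. }
  rewrite Qcr_lin_at_master; [ring | exact h1 | exact h2 | exact hv |].
  intros i j hi hj. unfold v. rewrite <- (denN_gauge a0 b0), <- (denM_gauge a0 b0). exact (hden i j hi hj).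
Qed.
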